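(* Let $P\in\mathcal{P}$, suppose $\nu:\mathcal{P}\to\mathcal{H}$ is pathwise differentiable at $P$, and let $\beta=(\beta_k)_{k\ge1}\in\ell^2\cap[0,1]^{\mathbb{N}}$. Define $r_P^\beta(h)(z)=\sum_{k=1}^\infty\beta_k\langle h,h_k\rangle_{\mathcal{H}}\dot{\nu}_P^*(h_k)(z)$. Then there is a set $\mathcal{Z}^\beta$ of $P$-probability one such that for every $z\in\mathcal{Z}^\beta$, $r_P^\beta(\cdot)(z):\mathcal{H}\to\mathbb{R}$ is a bounded linear functional with Riesz representation $$\phi_P^\beta(z)=\sum_{k=1}^\infty\beta_k\dot{\nu}_P^*(h_k)(z)h_k.$$ Moreover, $\sigma_P(\beta):=\|\phi_P^\beta\|_{L^2(P;\mathcal{H})}=\big[\sum_{k=1}^\infty\beta_k^2P\{\dot{\nu}_P^*(h_k)^2\}\big]^{1/2}\le\|\dot{\nu}_P^*\|_{\mathrm{op}}\|\beta\|_{\ell^2}<\infty$.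
   Context: Let $(\mathcal{Z},\mathbf{B})$ be a Polish space and $\mathcal{P}$ a model of probability distributions on it dominated by a $\sigma$-finite measure $\lambda$. For $P\in\mathcal{P}$ and $s\in L^2(P)$, $\mathscr{P}(P,\mathcal{P},s)$ is the set of submodels $\{P_\epsilon:\epsilon\in[0,\delta)\}\subset\mathcal{P}$ with $\|p_\epsilon^{1/2}-p^{1/2}-\epsilon s p^{1/2}/2\|_{L^2(\lambda)}=o(\epsilon)$ ($p_\epsilon,p$ the $\lambda$-densities). The tangent set is $\{s:\mathscr{P}(P,\mathcal{P},s)\ne\emptyset\}$, the tangent space $\dot{\mathcal{P}}_P$ its closed linear span in $L^2(P)$. $\mathcal{H}$ is a real separable Hilbert space with orthonormal basis $(h_k)_{k\ge1}$ (if $\dim\mathcal{H}<\infty$, an orthonormal basis padded with zero vectors). $\nu$ is pathwise differentiable at $P$ if there is a continuous linear $\dot{\nu}_P:\dot{\mathcal{P}}_P\to\mathcal{H}$ with $\|\nu(P_\epsilon)-\nu(P)-\epsilon\dot{\nu}_P(s)\|_{\mathcal{H}}=o(\epsilon)$ for every $s$ in the tangent set and every submodel in $\mathscr{P}(P,\mathcal{P},s)$; $\dot{\nu}_P^*:\mathcal{H}\to\dot{\mathcal{P}}_P$ is its adjoint (efficient influence operator), with $\|\cdot\|_{\mathrm{op}}$ the operator norm. For a function $f$, $Pf=\int f\,dP$. $L^2(P;\mathcal{H})$ denotes Bochner measurable $f:\mathcal{Z}\to\mathcal{H}$ with $\int\|f\|_{\mathcal{H}}^2dP<\infty$, with that norm.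 *)

From HB Require Import structures.
From mathcomp Require Import all_boot all_order all_algebra.
From mathcomp Require Import all_classical all_reals all_analysis.

Set Implicit Arguments.
Unset Strict Implicit.
Unset Printing Implicit Defensive.

Import Order.TTheory GRing.Theory Num.Theory.
Import numFieldNormedType.Exports.

Local Open Scope classical_set_scope.
Local Open Scope ring_scope.

Section Polish.
Context {R : realType} {d : measure_display} {Z : measurableType d}.

Definition is_metric (dist : Z -> Z -> R) :=
  [/\ forall x y, 0 <= dist x y,
      forall x y, dist x y = 0 <-> x = y,
      forall x y, dist x y = dist y x &
      forall x y z, dist x z <= dist x y + dist y z].

Definition metric_open (dist : Z -> Z -> R) (A : set Z) :=
  forall x, A x -> exists2 r : R, 0 < r & forall y, dist x y < r -> A y.

Definition metric_complete (dist : Z -> Z -> R) :=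
  forall u : nat -> Z,
    (forall e : R, 0 < e -> exists N, forall m n,
        (N <= m)%N -> (N <= n)%N -> dist (u m) (u n) < e) ->
    exists l, forall e : R, 0 < e -> exists N, forall n,
        (N <= n)%N -> dist (u n) l < e.

Definition metric_separable (dist : Z -> Z -> R) :=
  exists u : nat -> Z, forall x (e : R), 0 < e -> exists n, dist x (u n) < e.

Definition polish_borel (dist : Z -> Z -> R) :=
  [/\ is_metric dist, metric_complete dist, metric_separable dist &
      (@measurable d Z) = <<s metric_open dist >>].

End Polish.

Section Hilbert.
Context {R : realType} {H : normedModType R}.

Definition inner_product (ip : H -> H -> R) :=
  [/\ forall x y, ip x y = ip y x,
      forall a x y z, ip (a *: x + y) z = a * ip x z + ip y z &
      forall x, ip x x = `|x| ^+ 2].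

(** [e] is an orthonormal basis, padded with zero vectors (after its
    last element) when [H] is finite-dimensional. *)
Definition padded_onb (ip : H -> H -> R) (e : nat -> H) :=
  [/\ forall j k, j != k -> ip (e j) (e k) = 0,
      forall k, e k = 0 \/ ip (e k) (e k) = 1,
      forall j k, (j <= k)%N -> e j = 0 -> e k = 0 &
      forall x, (forall k, ip x (e k) = 0) -> x = 0].

End Hilbert.

Section Model.
Context {R : realType} {d : measure_display} {Z : measurableType d}.

Definition density (lam Q : set Z -> \bar R) (f : Z -> R) :=
  [/\ measurable_fun setT f, forall z, 0 <= f z &
      forall A, measurable A -> Q A = (\int[lam]_(z in A) (f z)%:E)%E].

Definition dominated (lam : set Z -> \bar R) (M : set (probability Z R)) :=
  forall Q, M Q -> forall A, measurable A -> lam A = 0%E -> Q A = 0%E.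

Definition sqnorm (mu : set Z -> \bar R) (f : Z -> R) : \bar R :=
  (\int[mu]_z ((f z) ^+ 2)%:E)%E.

Definition L2 (mu : set Z -> \bar R) (f : Z -> R) :=
  measurable_fun setT f /\ (sqnorm mu f < +oo)%E.

Definition L2norm (mu : set Z -> \bar R) (f : Z -> R) : R :=
  Num.sqrt (fine (sqnorm mu f)).

(** [{Pe e : e in [0, delta)}] is a submodel of [M] through [P] with
    score [s] (differentiable in quadratic mean):
    || pe_e^{1/2} - p^{1/2} - e s p^{1/2} / 2 ||_{L2(lam)} = o(e). *)
Definition submodel (lam : set Z -> \bar R) (M : set (probability Z R))
    (P : probability Z R) (s : Z -> R)
    (Pe : R -> probability Z R) (delta : R) :=
  [/\ 0 < delta,
      (forall e, 0 <= e < delta -> M (Pe e)) &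
      exists (p : Z -> R) (pe : R -> Z -> R),
        [/\ density lam P p,
            (forall e, 0 <= e < delta -> density lam (Pe e) (pe e)) &
            forall eps : R, 0 < eps -> exists2 eta : R, 0 < eta &
              forall e, 0 < e -> e < eta -> e < delta ->
                (sqnorm lam (fun z => Num.sqrt (pe e z) - Num.sqrt (p z)
                      - e * s z * Num.sqrt (p z) / 2)%R
                 <= ((eps * e) ^+ 2)%R%:E)%E]].

Definition tangent_set (lam : set Z -> \bar R) (M : set (probability Z R))
    (P : probability Z R) (s : Z -> R) :=
  L2 P s /\ exists Pe delta, submodel lam M P s Pe delta.

Definition lin_span (S : set (Z -> R)) (f : Z -> R) :=
  exists n (c : 'I_n -> R) (g : 'I_n -> Z -> R),
    (forall i, S (g i)) /\ f = (fun z => \sum_(i < n) c i * g i z).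

Definition tangent_space (lam : set Z -> \bar R) (M : set (probability Z R))
    (P : probability Z R) (t : Z -> R) :=
  L2 P t /\ forall eps : R, 0 < eps -> exists g,
    lin_span (tangent_set lam M P) g /\
    (sqnorm P (fun z => t z - g z)%R <= (eps ^+ 2)%R%:E)%E.

Definition pathwise_derivative {H : normedModType R}
    (lam : set Z -> \bar R) (M : set (probability Z R))
    (P : probability Z R) (nu : probability Z R -> H)
    (D : (Z -> R) -> H) :=
  [/\ (forall a s t, tangent_space lam M P s -> tangent_space lam M P t ->
          D (fun z => a * s z + t z) = a *: D s + D t),
      (exists C : R, forall s, tangent_space lam M P s ->
          `|D s| <= C * L2norm P s) &
      (forall s, tangent_set lam M P s -> forall Pe delta,
          submodel lam M P s Pe delta ->
          forall eps : R, 0 < eps -> exists2 eta : R, 0 < eta &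
            forall e, 0 < e -> e < eta -> e < delta ->
              `|nu (Pe e) - nu P - e *: D s| <= eps * e)].

Definition adjoint {H : normedModType R} (ip : H -> H -> R)
    (lam : set Z -> \bar R) (M : set (probability Z R))
    (P : probability Z R) (D : (Z -> R) -> H) (A : H -> Z -> R) :=
  forall h, tangent_space lam M P (A h) /\
    forall s, tangent_space lam M P s ->
      ip (D s) h = fine (\int[P]_z (s z * A h z)%:E)%E.

Definition opnorm {H : normedModType R} (P : probability Z R)
    (A : H -> Z -> R) : R :=
  sup [set L2norm P (A h) | h in [set h : H | `|h| <= 1]].

Definition simple_fun_H {H : normedModType R} (f : Z -> H) :=
  exists n (B : 'I_n -> set Z) (x : 'I_n -> H),
    (forall i, measurable (B i)) /\
    f = (fun z => \sum_(i < n) (\1_(B i) z : R) *: x i).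

Definition bochner_measurable {H : normedModType R}
    (P : probability Z R) (f : Z -> H) :=
  exists fn : nat -> Z -> H, (forall n, simple_fun_H (fn n)) /\
    {ae P, forall z, fn ^~ z @ \oo --> f z}.

End Model.

From HB Require Import structures.
From mathcomp Require Import all_boot all_order all_algebra.
From mathcomp Require Import all_classical all_reals all_analysis.
From mathcomp Require Import measurable_realfun ring lra.

Set Implicit Arguments.
Unset Strict Implicit.
Unset Printing Implicit Defensive.

Import Order.TTheory GRing.Theory Num.Theory.
Import numFieldNormedType.Exports.
Import HBSimple HBNNSimple.

Local Open Scope classical_set_scope.
Local Open Scope ring_scope.

(** Write A for the efficient influence operator.  The partial sums
    S_n(z) = sum_(k<n) beta_k A(h_k)(z) h_k have orthogonal
    increments, so in the complete space H they converge iff the energy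
    E(z) = sum_k beta_k^2 A(h_k)(z)^2 |h_k|^2 is finite, and then
    |phi(z)|^2 = E(z).  By monotone convergence
    P E = sum_k beta_k^2 P (A h_k)^2 <= |A|_op^2 |beta|^2 < oo, so E is finite
    P-almost surely, and there r(h)(z) = <h, phi(z)> by continuity of the inner
    product.  For Bochner measurability each coefficient is replaced by simple
    functions dominated by it; the error of the truncated sums vanishes by
    Tannery's theorem. *)

Section InnerProduct.
Context {R : realType} {H : normedModType R} (ip : H -> H -> R).
Hypothesis hip : inner_product ip.

Lemma ipC x y : ip x y = ip y x. Proof. by case: hip. Qed.

Lemma ipxx x : ip x x = `|x| ^+ 2. Proof. by case: hip. Qed.

Lemma ipDZl a x y z : ip (a *: x + y) z = a * ip x z + ip y z.
Proof. by case: hip. Qed.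

Lemma ip0l z : ip 0 z = 0.
Proof. by have := ipDZl (-1) z z z; rewrite scaleN1r addNr mulN1r addNr. Qed.

Lemma ipDl x y z : ip (x + y) z = ip x z + ip y z.
Proof. by rewrite -{1}[x]scale1r ipDZl mul1r. Qed.

Lemma ipZl a x z : ip (a *: x) z = a * ip x z.
Proof. by rewrite -[a *: x]addr0 ipDZl ip0l addr0. Qed.

Lemma ip0r z : ip z 0 = 0. Proof. by rewrite ipC ip0l. Qed.

Lemma ipDr z x y : ip z (x + y) = ip z x + ip z y.
Proof. by rewrite ipC ipDl !(ipC z). Qed.

Lemma ipZr a x z : ip z (a *: x) = a * ip z x.
Proof. by rewrite ipC ipZl ipC. Qed.

Lemma ipBr z x y : ip z (x - y) = ip z x - ip z y.
Proof. by rewrite -scaleN1r ipDr ipZr mulN1r. Qed.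

Lemma ipBl x y z : ip (x - y) z = ip x z - ip y z.
Proof. by rewrite ipC ipBr !(ipC z). Qed.

Lemma ip_sumr z I (r : seq I) (P : pred I) (F : I -> H) :
  ip z (\sum_(i <- r | P i) F i) = \sum_(i <- r | P i) ip z (F i).
Proof. exact: (big_morph (ip z) (ipDr z) (ip0r z)). Qed.

Lemma cauchy_schwarz x y : `|ip x y| <= `|x| * `|y|.
Proof.
have [->|y0] := eqVneq y 0; first by rewrite ip0r normr0 normr0 mulr0.
set p := ip x y; set a := `|x|; set b := `|y|.
have b0 : 0 < b by rewrite normr_gt0.
have : 0 <= b ^+ 2 * (a ^+ 2 * b ^+ 2 - p ^+ 2).
  have := sqr_ge0 `|b ^+ 2 *: x - p *: y|; rewrite -ipxx.
  rewrite ipBl !ipBr !ipZl !ipZr !ipxx (ipC y x) -/p -/a -/b.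
  by congr (0 <= _); ring.
rewrite pmulr_rge0 ?exprn_gt0 // subr_ge0 -exprMn => p2_le.
by rewrite -ler_sqr ?nnegrE ?mulr_ge0 ?normr_ge0 // -normrX ger0_norm ?sqr_ge0.
Qed.

Lemma cvg_ipr (u : nat -> H) l z :
  u @ \oo --> l -> (fun n => ip z (u n)) @ \oo --> ip z l.
Proof.
move=> ul; apply/cvgrPdist_le => e e0.
have ze0 : 0 < `|z| + 1 by rewrite ltr_wpDl.
move/cvgrPdist_le : ul => /(_ (e / (`|z| + 1))); rewrite divr_gt0 // => /(_ isT).
apply: filterS => n le_lun; rewrite -ipBr (le_trans (cauchy_schwarz _ _)) //.
by rewrite -(divfK (lt0r_neq0 ze0) e) mulrC ler_pM ?normr_ge0 ?lerDl.
Qed.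

Lemma cvg_series_ipr (e : nat -> H) (a : nat -> R) l z :
  series (fun k => a k *: e k) @ \oo --> l ->
  series (fun k => a k * ip z (e k)) @ \oo --> ip z l.
Proof.
have -> : series (fun k => a k * ip z (e k)) =
    (fun n => ip z (series (fun k => a k *: e k) n)).
  apply/funext => n; rewrite /series /= ip_sumr.
  by apply: eq_bigr => k _; rewrite ipZr.
exact: cvg_ipr.
Qed.

End InnerProduct.

Section OrthonormalFamily.
Context {R : realType} {H : normedModType R} (ip : H -> H -> R) (hb : nat -> H).
Hypotheses (hip : inner_product ip) (hon : padded_onb ip hb).

Lemma onb_norm k : hb k = 0 \/ `|hb k| = 1.
Proof.
case: hon => _ /(_ k) [->|]; first by left.
by rewrite (ipxx hip) => /eqP; rewrite sqrp_eq1 ?normr_ge0 // => /eqP; right.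
Qed.

Lemma normr_onb_le1 k : `|hb k| <= 1.
Proof. by case: (onb_norm k) => ->; rewrite ?normr0 ?ler01. Qed.

Lemma pythagoras (c : nat -> R) m n :
  `|\sum_(m <= k < n) c k *: hb k| ^+ 2 = \sum_(m <= k < n) c k ^+ 2 * `|hb k| ^+ 2.
Proof.
elim: n => [|n IH]; first by rewrite !big_geq // normr0 expr0n.
have [mn|nm] := leqP m n; last by rewrite !big_geq // normr0 expr0n.
have orth : ip (hb n) (\sum_(m <= k < n) c k *: hb k) = 0.
  rewrite (ip_sumr hip) big_nat_cond big1 // => k /andP[/andP[_ kn] _].
  by case: hon => orth _ _ _; rewrite (ipZr hip) orth ?mulr0 ?gtn_eqF.
rewrite !big_nat_recr //= -IH -!(ipxx hip) (ipDl hip) !(ipDr hip).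
by rewrite (ipC hip _ (c n *: hb n)) !(ipZl hip) !(ipZr hip) orth; ring.
Qed.

End OrthonormalFamily.

Section Tannery.
Context {R : realType}.

Lemma tannery (u : nat -> nat -> R) (v : nat -> R) :
  (forall n k, 0 <= u n k <= v k) -> cvgn (series v) ->
  (forall k, u ^~ k @ \oo --> 0) ->
  (fun n => \sum_(k < n) u n k) @ \oo --> 0.
Proof.
move=> uv cv u0; have v0 k : 0 <= v k by case/andP: (uv 0%N k); apply: le_trans.
apply/cvgrPdist_lt => e e0; have e20 : 0 < e / 2 by rewrite divr_gt0.
have [K tailK] : exists K, limn (series v) - series v K < e / 2.
  have /cvgrPdist_lt/(_ _ e20) [K _ /(_ K (leqnn K)) /= tail] := cv.
  by exists K; apply: le_lt_trans tail; exact: ler_norm.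
have head : (fun n => \sum_(k < K) u n k) @ \oo --> 0.
  have := cvg_big (op := +%R) (x0 := 0) (r := index_enum 'I_K) (Fa := fun=> 0)
    add_continuous _ (fun k (_ : true) => u0 k).
  by rewrite big1_eq; apply.
move/cvgrPdist_lt: head => /(_ _ e20); apply: filter_app; near=> n => head_lt.
have Kn : (K <= n)%N by near: n; exists K.
rewrite sub0r normrN ger0_norm ?sumr_ge0 // => [|k _]; last by case/andP: (uv n k).
rewrite -(big_mkord xpredT (u n)) (@big_cat_nat _ _ _ K) //= big_mkord.
rewrite sub0r normrN in head_lt.
rewrite (splitr e) ltr_leD ?(le_lt_trans (ler_norm _) head_lt) //.
have le_uv : \sum_(K <= k < n) u n k <= \sum_(K <= k < n) v k.
  by apply: ler_sum => k _; case/andP: (uv n k).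
apply: le_trans le_uv (le_trans _ (ltW tailK)); rewrite -(sub_series_geq v Kn).
rewrite lerB // nondecreasing_cvgn_le //.
by apply: nondecreasing_series => k _ _; exact: v0.
Unshelve. all: by end_near.
Qed.

End Tannery.

Section OrthonormalSeries.
Context {R : realType} {H : completeNormedModType R}
  (ip : H -> H -> R) (hb : nat -> H).
Hypotheses (hip : inner_product ip) (hon : padded_onb ip hb).

Lemma cvg_onb_seriesP (c : nat -> R) :
  cvg (series (fun k => c k *: hb k) @ \oo) <->
  cvgn (series (fun k => c k ^+ 2 * `|hb k| ^+ 2)).
Proof.
rewrite -!cauchy_cvgP !cauchy_seriesP.
have blockE m n : `|\sum_(m <= k < n) c k ^+ 2 * `|hb k| ^+ 2| =
    `|\sum_(m <= k < n) c k *: hb k| ^+ 2.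
  by rewrite -(pythagoras hip hon) ger0_norm ?sqr_ge0.
split=> cauchy e e0.
- have := cauchy (Num.sqrt e); rewrite sqrtr_gt0 e0 => /(_ isT).
  apply: filterS => n lt_sqrt.
  by rewrite blockE -(sqr_sqrtr (ltW e0)) ltr_pXn2r ?nnegrE ?sqrtr_ge0.
- have := cauchy _ (exprn_gt0 2 e0); apply: filterS => n.
  by rewrite blockE ltr_pXn2r ?nnegrE ?normr_ge0 ?ltW.
Qed.

Lemma onb_series_normE (c : nat -> R) l :
  series (fun k => c k *: hb k) @ \oo --> l ->
  `|l| ^+ 2 = limn (series (fun k => c k ^+ 2 * `|hb k| ^+ 2)).
Proof.
move=> Sl; apply/esym/cvg_lim => //.
have -> : series (fun k => c k ^+ 2 * `|hb k| ^+ 2) =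
    (fun n => `|series (fun k => c k *: hb k) n| ^+ 2).
  by apply/funext => n; rewrite /series /= (pythagoras hip hon).
by rewrite expr2; under eq_fun do rewrite expr2; apply: cvgM; apply: cvg_norm.
Qed.

Lemma onb_dominated_cvg (c : nat -> R) (u : nat -> nat -> R) :
  cvgn (series (fun k => c k ^+ 2 * `|hb k| ^+ 2)) ->
  (forall k, u ^~ k @ \oo --> c k) -> (forall n k, `|u n k - c k| <= `|c k|) ->
  (fun n => \sum_(k < n) u n k *: hb k) @ \oo -->
    limn (series (fun k => c k *: hb k)).
Proof.
move=> cw uc dom; set S := series _.
have errE n : \sum_(k < n) u n k *: hb k - S n = \sum_(k < n) (u n k - c k) *: hb k.
  by rewrite /S /series /= big_mkord -sumrB; apply: eq_bigr => k _; rewrite scalerBl.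
have err_sqr0 : (fun n => `|\sum_(k < n) (u n k - c k) *: hb k| ^+ 2) @ \oo --> 0.
  have errN n : `|\sum_(k < n) (u n k - c k) *: hb k| ^+ 2 =
      \sum_(k < n) (u n k - c k) ^+ 2 * `|hb k| ^+ 2.
    by have := pythagoras hip hon (fun k => u n k - c k) 0 n; rewrite !big_mkord.
  under eq_fun do rewrite errN.
  apply: (@tannery _ (fun n k => (u n k - c k) ^+ 2 * `|hb k| ^+ 2) _ _ cw)
    => [n k|k].
    rewrite mulr_ge0 ?sqr_ge0 //= ler_wpM2r ?sqr_ge0 //.
    rewrite -(real_normK (num_real (u n k - c k))) -(real_normK (num_real (c k))).
    by rewrite lerXn2r ?nnegrE ?normr_ge0.
  have -> : 0 = (c k - c k) ^+ 2 * `|hb k| ^+ 2 :> R by rewrite subrr expr2 !mul0r.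
  apply: cvgM; last exact: cvg_cst.
  rewrite expr2; under eq_fun do rewrite expr2.
  by apply: cvgM; apply: cvgB => //; exact: cvg_cst.
have err0 : (fun n => \sum_(k < n) u n k *: hb k - S n) @ \oo --> 0.
  have normE (x : H) : `|x| = Num.sqrt (`|x| ^+ 2) by rewrite sqrtr_sqr normr_id.
  apply: norm_cvg0; under eq_fun do rewrite errE normE.
  by rewrite -sqrtr0; apply: (continuous_cvg _ (@sqrt_continuous R 0)).
rewrite -[X in _ --> X]add0r.
under eq_fun => n do rewrite -(subrK (S n) (\sum_(k < n) u n k *: hb k)).
by apply: cvgD => //; apply/cvg_onb_seriesP.
Qed.

End OrthonormalSeries.

Section SimpleFunctions.
Context {R : realType} {d : measure_display} {T : measurableType d}.

Lemma simple_fun_HD {H : normedModType R} (f g : T -> H) :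
  simple_fun_H f -> simple_fun_H g -> simple_fun_H (f \+ g).
Proof.
move=> [n [B [x [mB ->]]]] [m [C [y [mC ->]]]].
exists (n + m)%N,
  (fun i => match fintype.split i with inl j => B j | inr j => C j end),
  (fun i => match fintype.split i with inl j => x j | inr j => y j end); split.
  by move=> i; case: fintype.split.
apply/funext => z; rewrite big_split_ord /=.
by congr (_ + _); apply: eq_bigr => i _;
  rewrite ?(unsplitK (inl _)) ?(unsplitK (inr _)).
Qed.

Lemma simple_fun_H_sum {H : normedModType R} n (F : 'I_n -> T -> H) :
  (forall i, simple_fun_H (F i)) -> simple_fun_H (fun z => \sum_(i < n) F i z).
Proof.
move=> sF; elim: n F sF => [|n IH] F sF.
  exists 0%N, (fun=> set0), (fun=> 0); split => [//|].
  by apply/funext => z; rewrite !big_ord0.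
under eq_fun do rewrite big_ord_recr.
by apply: simple_fun_HD => //; apply: IH.
Qed.

Lemma simple_fun_H_scale {H : normedModType R} (s : {sfun T >-> R}) (x : H) :
  simple_fun_H (fun z => s z *: x).
Proof.
set S := finmap.enum_fset (fset_set (range s)).
exists (size S), (fun i => s @^-1` [set S`_i]), (fun i => S`_i *: x); split => //.
by apply/funext => z; rewrite [s z]fimfunEord scaler_suml; apply: eq_bigr => i _;
  rewrite scalerA mulrC.
Qed.

End SimpleFunctions.

Section DominatedApproximation.
Context {R : realType} {d : measure_display} {T : measurableType d}.

Lemma nnsfun_approx_pos_part (h : T -> R) : measurable_fun setT h ->
  exists p : {nnsfun T >-> R}^nat,
    (forall z, p ^~ z @ \oo --> Num.max (h z) 0) /\
    (forall n z, p n z <= Num.max (h z) 0).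
Proof.
move=> mh; have mh0 : measurable_fun setT (fun z => (Num.max (h z) 0)%:E).
  by apply/measurable_EFinP; exact: measurable_maxr.
have h0 z : [set: T] z -> (0 <= (Num.max (h z) 0)%:E)%E.
  by rewrite lee_fin le_max lexx orbT.
exists (nnsfun_approx measurableT mh0); split => [z|n z].
  apply: (fine_cvg (f := fun n => (nnsfun_approx measurableT mh0 n z)%:E)).
  exact: cvg_nnsfun_approx.
by rewrite -lee_fin nnsfun_approxE; exact: le_approx.
Qed.

Lemma sfun_dominated_approx (f : T -> R) : measurable_fun setT f ->
  exists g : {sfun T >-> R}^nat,
    (forall z, g ^~ z @ \oo --> f z) /\ (forall n z, `|g n z - f z| <= `|f z|).
Proof.
move=> mf; have [p [p_cvg p_le]] := nnsfun_approx_pos_part mf.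
have [m [m_cvg m_le]] :=
  nnsfun_approx_pos_part (measurableT_comp (@oppr_measurable R setT) mf).
exists (fun n => p n \- m n); split => [z|n z] /=.
  suff -> : f z = Num.max (f z) 0 - Num.max (- f z) 0 by apply: cvgB.
  by rewrite !maxEle; case: (lerP (f z) 0); case: (lerP (- f z) 0) => *; lra.
move: (@fun_ge0 _ _ (p n) z) (@fun_ge0 _ _ (m n) z) (p_le n z) (m_le n z).
rewrite ler_norml -real_maxrN ?num_real //= !maxEle.
by case: (lerP (f z) 0); case: (lerP (- f z) 0); case: (lerP (f z) (- f z)) => *;
  apply/andP; split; lra.
Qed.

End DominatedApproximation.

Lemma eseries_EFin {R : realType} (u : nat -> R) :
  cvgn (series u) -> (\sum_(k <oo) (u k)%:E)%E = (limn (series u))%:E.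
Proof.
move=> cu; rewrite -EFin_lim //; congr (limn _).
by apply/funext => n; rewrite /= sumEFin.
Qed.

Lemma sqrt_fine_le {R : realType} (x : \bar R) (a L : R) :
  (0 <= x)%E -> 0 <= a -> (x <= (a ^+ 2 * L)%:E)%E ->
  [/\ 0 <= Num.sqrt (fine x), (Num.sqrt (fine x) ^+ 2)%:E = x &
      Num.sqrt (fine x) <= a * Num.sqrt L].
Proof.
move=> x0 a0 x_le.
have xE : x = (fine x)%:E by rewrite fineK // ge0_fin_numE // (le_lt_trans x_le) ?ltry.
rewrite sqr_sqrtr ?fine_ge0 // -xE sqrtr_ge0; split => //.
move: x_le; rewrite xE lee_fin => /ler_wsqrtr /le_trans; apply.
by rewrite sqrtrM ?sqr_ge0 // sqrtr_sqr ger0_norm.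
Qed.

Section OrthonormalRandomSeries.
Context {R : realType} {d : measure_display} {T : measurableType d}
  {H : completeNormedModType R} (ip : H -> H -> R) (hb : nat -> H).
Hypotheses (hip : inner_product ip) (hon : padded_onb ip hb).
Variables (P : probability T R) (c : nat -> T -> R).
Hypothesis mc : forall k, measurable_fun setT (c k).

Let w k z := c k z ^+ 2 * `|hb k| ^+ 2.
Let phi z := limn (series (fun k => c k z *: hb k)).

Let mw k : measurable_fun setT (w k).
Proof. by apply: measurable_funM => //; apply: measurable_funM; exact: mc. Qed.

Lemma bochner_measurable_onb_series :
  {ae P, forall z, cvgn (series (w ^~ z))} -> bochner_measurable P phi.
Proof.
move=> ae_cvg; have /choice[g gP] := fun k => sfun_dominated_approx (mc k).
exists (fun n z => \sum_(k < n) g k n z *: hb k); split.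
  by move=> n; apply: simple_fun_H_sum => k; exact: simple_fun_H_scale.
apply: filterS ae_cvg => z cvg_z.
by apply: (onb_dominated_cvg hip hon (u := fun n k => g k n z) cvg_z) => [k|n k];
  case: (gP k).
Qed.

Definition onb_energy z := (\sum_(k <oo) (c k z ^+ 2 * `|hb k| ^+ 2)%:E)%E.

Definition finite_energy := [set z | (onb_energy z < +oo)%E].

Lemma measurable_onb_energy : measurable_fun setT onb_energy.
Proof.
apply: ge0_emeasurable_sum => [k z _ _|k _]; first by rewrite lee_fin mulr_ge0 ?sqr_ge0.
exact/measurable_EFinP/mw.
Qed.

Lemma measurable_finite_energy : measurable finite_energy.
Proof.
rewrite -[finite_energy]setTI.
exact: (measurable_lte measurableT measurable_onb_energy
  (measurable_cst (+oo%E : \bar R))).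
Qed.

Lemma finite_energyP z : finite_energy z <-> cvgn (series (w ^~ z)).
Proof.
split=> [|cvg_z]; first by apply: nnseries_is_cvg => k; rewrite mulr_ge0 ?sqr_ge0.
by rewrite /finite_energy /onb_energy /= eseries_EFin // ltry.
Qed.

Lemma integral_onb_energy :
  (\int[P]_z onb_energy z = \sum_(k <oo) \int[P]_z (w k z)%:E)%E.
Proof.
apply: integral_nneseries => // [k|k z _]; first exact/measurable_EFinP/mw.
by rewrite lee_fin mulr_ge0 ?sqr_ge0.
Qed.

Hypothesis energy_fin : (\sum_(k <oo) \int[P]_z (w k z)%:E < +oo)%E.

Lemma finite_energy_ae : {ae P, forall z, finite_energy z}.
Proof.
have energy0 z : (0 <= onb_energy z)%E.
  by apply: nneseries_ge0 => k _ _; rewrite lee_fin mulr_ge0 ?sqr_ge0.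
have : P.-integrable setT onb_energy.
  apply/integrableP; split; first exact: measurable_onb_energy.
  under eq_integral do rewrite gee0_abs //.
  by rewrite integral_onb_energy.
move/(integrable_ae measurableT); apply: filterS => z /(_ I).
by rewrite ge0_fin_numE.
Qed.

Lemma measure_finite_energy : P finite_energy = 1%E.
Proof.
have [N [mN PN sub]] := finite_energy_ae.
have PC : P (~` finite_energy) = 0%E.
  apply/le_anti; rewrite measure_ge0 andbT -PN le_measure ?inE //.
  exact/measurableC/measurable_finite_energy.
by have := probability_setC P (measurableC measurable_finite_energy);
  rewrite setCK PC sube0.
Qed.

Lemma finite_energy_cvg z :
  finite_energy z -> series (fun k => c k z *: hb k) @ \oo --> phi z.
Proof. by move=> /finite_energyP /(cvg_onb_seriesP hip hon). Qed.

Lemma finite_energy_riesz z h : finite_energy z ->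
  series (fun k => c k z * ip h (hb k)) @ \oo --> ip h (phi z).
Proof. by move=> /finite_energy_cvg; apply: cvg_series_ipr. Qed.

Let phi_sqnormE z : finite_energy z -> `|phi z| ^+ 2 = limn (series (w ^~ z)).
Proof. by move=> /finite_energy_cvg; exact: (onb_series_normE hip hon). Qed.

Lemma measurable_onb_series_sqnorm : measurable_fun setT (fun z => `|phi z| ^+ 2).
Proof.
have mE := measurable_finite_energy.
rewrite -(setUv finite_energy) measurable_funU //; last exact: measurableC.
split.
  apply: (measurable_fun_cvg (h := fun n z => series (w ^~ z) n)) => [n|z].
    by apply: measurable_funTS; apply: measurable_sum => k; exact: mw.
  by move=> Ez; rewrite phi_sqnormE //; exact/finite_energyP.
(* off [finite_energy] the series diverges, so [phi z] is the junk limit [point] *)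
apply: (eq_measurable_fun (fun=> `|point : H| ^+ 2)) => [z|];
  last exact: measurable_cst.
rewrite inE => /finite_energyP ncvg; rewrite /phi dvgP //.
by move/(cvg_onb_seriesP hip hon).
Qed.

Lemma integral_onb_series_sqnorm :
  (\int[P]_z (`|phi z| ^+ 2)%:E = \sum_(k <oo) \int[P]_z (w k z)%:E)%E.
Proof.
rewrite -integral_onb_energy; apply: ge0_ae_eq_integral => //.
- exact/measurable_EFinP/measurable_onb_series_sqnorm.
- exact: measurable_onb_energy.
- by move=> z _; apply: nneseries_ge0 => k _ _; rewrite lee_fin mulr_ge0 ?sqr_ge0.
apply: filterS finite_energy_ae => z Ez _.
by rewrite /onb_energy eseries_EFin ?phi_sqnormE //; exact/finite_energyP.
Qed.

End OrthonormalRandomSeries.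

Section EfficientInfluenceOperator.
Context {R : realType} {d : measure_display} {T : measurableType d}
  {H : normedModType R} (ip : H -> H -> R) (lam : set T -> \bar R)
  (M : set (probability T R)) (nu : probability T R -> H) (P : probability T R)
  (D : (T -> R) -> H) (A : H -> T -> R).
Hypotheses (hip : inner_product ip) (hpd : pathwise_derivative lam M P nu D)
  (hadj : adjoint ip lam M P D A).

Lemma L2_adjoint h : L2 P (A h).
Proof. by case: (hadj h) => -[]. Qed.

Lemma measurable_adjoint h : measurable_fun setT (A h).
Proof. by case: (L2_adjoint h). Qed.

Lemma sqnorm_adjointE h : sqnorm P (A h) = (L2norm P (A h) ^+ 2)%:E.
Proof.
have sq0 : (0 <= sqnorm P (A h))%E.
  by apply: integral_ge0 => z _; rewrite lee_fin sqr_ge0.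
rewrite sqr_sqrtr ?fine_ge0 // fineK // ge0_fin_numE //; by case: (L2_adjoint h).
Qed.

Lemma adjoint_bounded : exists2 C, 0 <= C & forall h, L2norm P (A h) <= C * `|h|.
Proof.
case: hpd => _ [C0 D_le] _; exists (Num.max C0 0) => [|h].
  by rewrite le_max lexx orbT.
have [tA ipA] := hadj h.
have aE : L2norm P (A h) ^+ 2 = ip (D (A h)) h.
  rewrite ipA // -[LHS]/(fine (L2norm P (A h) ^+ 2)%:E) -sqnorm_adjointE.
  by congr fine; apply: eq_integral => z _; rewrite expr2.
set a := L2norm P (A h) in aE *.
have a0 : 0 <= a by exact: sqrtr_ge0.
have : a ^+ 2 <= Num.max C0 0 * a * `|h|.
  rewrite aE (le_trans (ler_norm _)) // (le_trans (cauchy_schwarz hip _ _)) //.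
  by rewrite ler_wpM2r // (le_trans (D_le _ tA)) // ler_wpM2r // le_max lexx.
have [->|a_gt0] := eqVneq a 0; first by rewrite mulr_ge0 ?le_max ?lexx ?orbT.
by rewrite expr2 -mulrA mulrCA ler_pM2l // lt_def a_gt0.
Qed.

Lemma L2norm_le_opnorm h : `|h| <= 1 -> L2norm P (A h) <= opnorm P A.
Proof.
move=> h1; apply: ub_le_sup; last by exists h.
have [C C0 AC] := adjoint_bounded; exists C => _ [g /= g1 <-].
by rewrite (le_trans (AC g)) // ler_piMr.
Qed.

Lemma opnorm_ge0 : 0 <= opnorm P A.
Proof. by rewrite (le_trans _ (L2norm_le_opnorm (h := 0) _)) ?sqrtr_ge0 ?normr0. Qed.

Lemma L2norm_adjoint0 : L2norm P (A 0) = 0.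
Proof.
have [C _ /(_ 0)] := adjoint_bounded; rewrite normr0 mulr0 => le0.
by apply/le_anti; rewrite le0 sqrtr_ge0.
Qed.

Variable hb : nat -> H.
Hypothesis hon : padded_onb ip hb.

Lemma integral_adjoint_onb (b : R) k :
  (\int[P]_z ((b * A (hb k) z) ^+ 2 * `|hb k| ^+ 2)%:E =
   (b ^+ 2)%:E * \int[P]_z (A (hb k) z ^+ 2)%:E)%E.
Proof.
case: (onb_norm hip hon k) => hk; rewrite hk.
  under eq_integral do rewrite normr0 expr0n /= mulr0.
  by rewrite integral0 -/(sqnorm P (A 0)) sqnorm_adjointE L2norm_adjoint0 expr0n mule0.
under eq_integral do rewrite expr1n mulr1 exprMn EFinM.
rewrite ge0_integralZl_EFin ?sqr_ge0 //; first by move=> z _; rewrite lee_fin sqr_ge0.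
by apply/measurable_EFinP/measurable_funX; exact: measurable_adjoint.
Qed.

Lemma integral_adjoint_onb_le k :
  (\int[P]_z (A (hb k) z ^+ 2)%:E <= (opnorm P A ^+ 2)%:E)%E.
Proof.
rewrite -/(sqnorm P (A (hb k))) sqnorm_adjointE lee_fin.
rewrite lerXn2r ?nnegrE ?sqrtr_ge0 ?opnorm_ge0 //.
exact/L2norm_le_opnorm/(normr_onb_le1 hip hon).
Qed.

Lemma adjoint_onb_series_le (beta : nat -> R) :
  cvgn (series (fun k => beta k ^+ 2)) ->
  (\sum_(k <oo) ((beta k ^+ 2)%:E * \int[P]_z (A (hb k) z ^+ 2)%:E) <=
    (opnorm P A ^+ 2 * limn (series (fun k => beta k ^+ 2)))%:E)%E.
Proof.
move=> beta_cvg; rewrite EFinM -eseries_EFin // -nneseriesZl => [|k _]; last first.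
  by rewrite lee_fin sqr_ge0.
apply: lee_nneseries => [k _ _|k _].
  rewrite mule_ge0 ?lee_fin ?sqr_ge0 //.
  by apply: integral_ge0 => z _; rewrite lee_fin sqr_ge0.
by rewrite [X in (_ <= X)%E]muleC lee_wpmul2l ?lee_fin ?sqr_ge0 ?integral_adjoint_onb_le.
Qed.

End EfficientInfluenceOperator.

Theorem lemma1 (R : realType) (d : measure_display) (Z : measurableType d)
    (H : completeNormedModType R) (ip : H -> H -> R) (hb : nat -> H)
    (lam : {measure set Z -> \bar R}) (M : set (probability Z R))
    (nu : probability Z R -> H) (P : probability Z R)
    (D : (Z -> R) -> H) (A : H -> Z -> R) (beta : nat -> R) :
  (exists dist : Z -> Z -> R, polish_borel dist) ->
  inner_product ip -> padded_onb ip hb ->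
  sigma_finite setT lam -> dominated lam M ->
  M P ->
  pathwise_derivative lam M P nu D ->
  adjoint ip lam M P D A ->
  (forall k, 0 <= beta k <= 1) ->
  cvg (series (fun k => beta k ^+ 2) @ \oo) ->
  let r := fun (h : H) (z : Z) =>
    limn (series (fun k => beta k * ip h (hb k) * A (hb k) z)) in
  let phi := fun z : Z =>
    limn (series (fun k => (beta k * A (hb k) z) *: hb k)) in
  (exists Zb : set Z, [/\ measurable Zb, P Zb = 1%E &
     forall z, Zb z ->
       [/\ cvg (series (fun k => (beta k * A (hb k) z) *: hb k) @ \oo),
           (forall h, cvg (series (fun k => beta k * ip h (hb k) * A (hb k) z) @ \oo)),
           (forall a h g, r (a *: h + g) z = a * r h z + r g z),
           (exists C : R, forall h, `|r h z| <= C * `|h|) &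
           (forall h, r h z = ip h (phi z))]])
  /\ bochner_measurable P phi
  /\ exists sigma : R,
       [/\ 0 <= sigma,
           ((sigma ^+ 2)%:E = \int[P]_z (`|phi z| ^+ 2)%:E)%E,
           ((sigma ^+ 2)%:E =
              \sum_(k <oo) ((beta k ^+ 2)%:E * \int[P]_z ((A (hb k) z) ^+ 2)%:E))%E &
           sigma <= opnorm P A * Num.sqrt (limn (series (fun k => beta k ^+ 2))) ].
Proof.
move=> _ hip hon _ _ _ hpd hadj _ beta_cvg r phi.
pose c k z := beta k * A (hb k) z.
have mc k : measurable_fun setT (c k).
  by apply: measurable_funM => //; exact: measurable_adjoint hadj _.
set S := (\sum_(k <oo) _)%E.
have SE : S = (\sum_(k <oo) \int[P]_z (c k z ^+ 2 * `|hb k| ^+ 2)%:E)%E.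
  by apply: eq_eseriesr => k _; rewrite (integral_adjoint_onb hip hpd hadj hon).
have S_le := adjoint_onb_series_le hip hpd hadj hon beta_cvg.
have energy_fin : (\sum_(k <oo) \int[P]_z (c k z ^+ 2 * `|hb k| ^+ 2)%:E < +oo)%E.
  by rewrite -SE (le_lt_trans S_le) ?ltry.
have rE h z : (fun k => beta k * ip h (hb k) * A (hb k) z) =
    (fun k => c k z * ip h (hb k)).
  by apply/funext => k; rewrite /c; ring.
have rP h z : finite_energy hb c z -> r h z = ip h (phi z).
  by rewrite /r rE => /(finite_energy_riesz hip hon (h := h)) /cvg_lim ->.
split.
  exists (finite_energy hb c); split => [||z Ez].
  - exact: measurable_finite_energy _ _ mc.
  - exact: measure_finite_energy _ mc energy_fin.
  split => [||a h g||h]; rewrite ?rP //.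
  - by apply/cvg_ex; exists (phi z); exact: (finite_energy_cvg hip hon Ez).
  - move=> h; rewrite rE; apply/cvg_ex; eexists.
    exact: (finite_energy_riesz hip hon Ez).
  - by rewrite (ipDZl hip).
  - by exists `|phi z| => h; rewrite rP // mulrC cauchy_schwarz.
split.
  apply: (bochner_measurable_onb_series hip hon mc).
  by apply: filterS (finite_energy_ae mc energy_fin) => z /finite_energyP.
have S_int : S = (\int[P]_z (`|phi z| ^+ 2)%:E)%E.
  by rewrite SE (integral_onb_series_sqnorm hip hon mc energy_fin).
have S_ge0 : (0 <= S)%E by rewrite S_int integral_ge0 // => z _; rewrite lee_fin sqr_ge0.
have [] := sqrt_fine_le S_ge0 (opnorm_ge0 hip hpd hadj) S_le.
by exists (Num.sqrt (fine S)); split; rewrite -?S_int.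
Qed.
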